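(* Let $p\in[1,\infty]$, $d\in\mathbb N$, $m_0:=d$, $m_1\le m_2\le\cdots$ positive integers, and $\mathbf W_n\in\mathbb R^{m_n\times m_{n-1}}$ for $n\in\mathbb N$. If $\mathbf W_n=\mathbf I_{m_n,m_{n-1}}+\mathbf P_n$ with $\sum_{n=1}^\infty\|\mathbf P_n\|_p<\infty$, then $\lim_{n\to\infty}\mathbf I_{\infty,m_n}\mathbf W_n\mathbf W_{n-1}\cdots\mathbf W_1$ exists in $\mathcal B(\mathbb R^d,\ell^p)$.
   Context: $\|\cdot\|_p$ on matrices denotes the operator norm induced by the $\ell^p$ vector norms. For $m'\ge m$, $\mathbf I_{m',m}$ is the $m'\times m$ matrix with top $m\times m$ block the identity and the remaining entries zero; $\mathbf I_{\infty,m}$ is the analogous matrix with infinitely many rows (the embedding $\mathbb R^m\to\ell^p$). $\mathcal B(\mathbb R^d,\ell^p)$ is the Banach space of bounded linear operators $\mathbb R^d\to\ell^p$ with the induced operator norm. *)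

From HB Require Import structures.
From mathcomp Require Import all_boot all_order all_algebra.
From mathcomp Require Import all_classical all_reals all_analysis.
Set Implicit Arguments. Unset Strict Implicit. Unset Printing Implicit Defensive.
Import Order.TTheory GRing.Theory Num.Theory.
Local Open Scope ring_scope.
Local Open Scope classical_set_scope.

Section Defs.
Variable R : realType.

Definition lpnorm (p : \bar R) (x : nat -> R) : \bar R :=
  Lnorm (@counting nat R) p (fun k => (x k)%:E).

(** embedding R^m -> l^p, i.e. multiplication by I_{oo,m}
    (column vectors padded with zeros) *)
Definition Iinf (m : nat) (x : 'cV[R]_m) : nat -> R :=
  fun k => match (insub k : option 'I_m) with
           | Some i => x i ord0 | None => 0 end.

Definition Imx (m' m : nat) : 'M[R]_(m', m) :=
  \matrix_(i < m', j < m) ((nat_of_ord i == nat_of_ord j)%:R).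

Definition opnorm (p : \bar R) (m : nat) (S : 'cV[R]_m -> nat -> R) : \bar R :=
  ereal_sup [set lpnorm p (S x) | x in [set x | (lpnorm p (Iinf x) <= 1)%E]].

Definition mxnorm (p : \bar R) (m' m : nat) (A : 'M[R]_(m', m)) : \bar R :=
  opnorm p (fun x => Iinf (A *m x)).

Definition dimseq (d : nat) (ms : nat -> nat) (n : nat) : nat :=
  if n is k.+1 then ms k else d.

(** W_n W_(n-1) ... W_1, where W k : 'M_(m_(k+1), m_k) stands for W_(k+1) *)
Fixpoint prodW (d : nat) (ms : nat -> nat)
  (W : forall k, 'M[R]_(dimseq d ms k.+1, dimseq d ms k)) (n : nat)
  : 'M[R]_(dimseq d ms n, d) :=
  match n with
  | 0 => 1%:M
  | k.+1 => W k *m prodW W k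
  end.

End Defs.

(* Write x_n := W_n ... W_1 x.  Since W_(n+1) = I + P_(n+1), each step multiplies
   the l^p norm by at most 1 + ||P_(n+1)||_p <= exp ||P_(n+1)||_p, so that
   ||x_n||_p <= e^S ||x||_p with S := sum_k ||P_k||_p.  As m_n <= m_(n+1) for
   n >= 1, the embedded vectors satisfy
     I_(oo,m_(n+1)) x_(n+1) - I_(oo,m_n) x_n = I_(oo,m_(n+1)) P_(n+1) x_n,
   whose norm is at most e^S ||P_(n+1)||_p ||x||_p: the increments are summable.
   Hence I_(oo,m_n) x_n converges coordinatewise to some T x, and Fatou's lemma
   for the l^p norm bounds the distance to T x by e^S ||x||_p times the tail of
   the series, uniformly on the unit ball. *)

From HB Require Import structures.
From mathcomp Require Import all_boot all_order all_algebra.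
From mathcomp Require Import all_classical all_reals all_analysis.
From mathcomp Require Import ess_sup_inf.
Set Implicit Arguments. Unset Strict Implicit. Unset Printing Implicit Defensive.
Import Order.TTheory GRing.Theory Num.Theory.
Import numFieldNormedType.Exports.
Local Open Scope ring_scope.
Local Open Scope classical_set_scope.

Section counting_nat.
Variable R : realType.
Local Open Scope ereal_scope.

Lemma counting_set1 (n : nat) : @counting nat R [set n] = 1.
Proof.
rewrite /counting asboolT; last exact: finite_set1.
by rewrite fset_set1 finmap.cardfs1.
Qed.

Lemma ae_counting_nat (P : nat -> Prop) :
  (\forall k \ae @counting nat R, P k) -> forall k, P k.
Proof.
move=> [A [_ A0 PA]] k; apply: contrapT => Pk.
have : @counting nat R [set k] <= counting A.
  by apply: le_measure; rewrite ?inE // => _ ->; apply: PA.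
by rewrite counting_set1 A0 lee_fin ler10.
Qed.

Lemma counting_setT_gt0 : 0 < @counting nat R setT.
Proof.
by rewrite (@lt_le_trans _ _ 1) // -(counting_set1 0) le_measure ?inE.
Qed.

End counting_nat.

Section lpnorm_formulas.
Variable R : realType.
Local Open Scope ereal_scope.

Lemma lpnorm_EFin (r : R) (f : nat -> R) : (0 < r)%R ->
  lpnorm r%:E f = (\sum_(k <oo) (`|f k| `^ r)%:E) `^ r^-1.
Proof. by move=> r0; rewrite /lpnorm Lnorm_counting. Qed.

Lemma lpnormyE (f : nat -> R) :
  lpnorm +oo f = ess_sup counting (fun k => `|f k|%:E).
Proof. by rewrite /lpnorm unlock /Lnorm counting_setT_gt0. Qed.

Lemma lpnormy_leP (f : nat -> R) (y : \bar R) :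
  lpnorm +oo f <= y <-> forall k, `|f k|%:E <= y.
Proof.
rewrite lpnormyE; split => [/ess_supP|fy]; first exact: ae_counting_nat.
by apply/ess_supP/nearW.
Qed.

End lpnorm_formulas.

Section series_increments.
Variable R : realType.

Lemma cvgn_summable_increments (u r : R ^nat) :
  (forall j, `|u j - u j.+1| <= r j) -> cvgn (series r) -> cvgn u.
Proof.
move=> ur r_cvg; rewrite (_ : u = fun n => u 0%N + series (telescope u) n).
  apply: is_cvgD; first exact: is_cvg_cst.
  apply: normed_cvg; apply: (series_le_cvg _ _ _ r_cvg) => j /=.
  - exact: normr_ge0.
  - exact: le_trans (normr_ge0 _) (ur j).
  - by rewrite distrC.
by apply/funext => n; rewrite -eq_sum_telescope.
Qed.

Lemma series_le_limn (r : R ^nat) n : (forall j, 0 <= r j) ->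
  cvgn (series r) -> series r n <= limn (series r).
Proof.
move=> r0 r_cvg; apply: (nondecreasing_cvgn_le _ r_cvg).
by apply/nondecreasing_seqP => m; rewrite seriesSr lerDl.
Qed.

End series_increments.

Section nneseries_fine.
Variable R : realType.
Local Open Scope ereal_scope.
Variable u : (\bar R)^nat.
Hypotheses (u_ge0 : forall k, 0 <= u k) (u_lty : \sum_(0 <= k <oo) u k < +oo).

Lemma nneseries_lty_fin_num k : u k \is a fin_num.
Proof.
rewrite ge0_fin_numE //; apply: le_lt_trans u_lty.
apply: le_trans (nneseries_lim_ge k.+1 (fun n _ _ => u_ge0 n)).
by rewrite big_nat_recr //= leeDr // sume_ge0.
Qed.

Lemma is_cvg_series_fine : cvgn (series (fun k => fine (u k))).
Proof.
apply: nondecreasing_is_cvgn.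
  by apply/nondecreasing_seqP => n; rewrite seriesSr lerDl fine_ge0.
exists (fine (\sum_(0 <= k <oo) u k)) => _ [n _ <-].
rewrite -lee_fin fineK ?ge0_fin_numE ?nneseries_ge0 //.
rewrite /series /= -sumEFin.
under eq_bigr => k _ do rewrite fineK ?nneseries_lty_fin_num //.
exact: nneseries_lim_ge.
Qed.

End nneseries_fine.

Lemma is_cvg_series_shiftS (R : realType) (u : R ^nat) :
  cvgn (series u) -> cvgn (series (fun j => u j.+1)).
Proof.
move=> u_cvg; rewrite (_ : series _ = fun n => series u n.+1 - u 0%N).
  apply: is_cvgB; last exact: is_cvg_cst.
  by apply: (cvgP (limn (series u))); rewrite (cvg_shiftS (series u)).
apply/funext => n; rewrite !seriesEord /= big_ord_recl (addrC (u 0%N)) addrK.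
by apply: eq_bigr => i _; rewrite lift0.
Qed.

Section lpnorm_properties.
Variables (R : realType) (p : \bar R).
Hypothesis p1 : (1 <= p)%E.
Local Notation N := (lpnorm p).
Implicit Types f g : nat -> R.

Lemma lpnorm_ge0 f : (0 <= N f)%E.
Proof. exact: Lnorm_ge0. Qed.

Lemma eq_lpnorm f g : f =1 g -> N f = N g.
Proof. by move=> fg; apply: eq_Lnorm => k; rewrite /= fg. Qed.

Lemma lpnorm0 : N (fun=> 0) = 0%E.
Proof.
have p0 : p != 0%E by rewrite gt_eqF // (lt_le_trans _ p1).
by rewrite /lpnorm -(Lnorm0 (@counting nat R) p0); apply: eq_Lnorm.
Qed.

Lemma lpnormD f g : (N (fun k => (f k + g k)%R) <= N f + N g)%E.
Proof. exact: eminkowski. Qed.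

Lemma lpnormZ (a : R) f : N (fun k => a * f k) = (`|a|%:E * N f)%E.
Proof.
case: p p1 => [r r1|_|//].
  have r0 : 0 < r by move: r1; rewrite lee_fin; apply: lt_le_trans.
  rewrite !lpnorm_EFin //.
  under eq_eseriesr => k _ do rewrite normrM powRM // EFinM.
  rewrite nneseriesZl; last by move=> k _; rewrite lee_fin powR_ge0.
  rewrite poweRM ?lee_fin ?powR_ge0 ?nneseries_ge0 //.
  by rewrite poweR_EFin -powRrM mulfV ?gt_eqF // powRr1.
rewrite !lpnormyE -ess_supZl ?counting_setT_gt0 //.
by congr ess_sup; apply/funext => k /=; rewrite normrM EFinM.
Qed.

Lemma lpnormN f : N (fun k => - f k) = N f.
Proof.
rewrite (@eq_lpnorm _ (fun k => -1 * f k)) => [|k]; last by rewrite mulN1r.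
by rewrite lpnormZ normrN normr1 mul1e.
Qed.

Lemma le_lpnorm f g : (forall k, `|f k| <= `|g k|) -> (N f <= N g)%E.
Proof.
move=> fg; case: p p1 => [r r1|_|//]; last first.
  apply/lpnormy_leP => k; apply: le_trans (_ : `|g k|%:E <= _)%E.
    by rewrite lee_fin.
  by move: k; apply/lpnormy_leP.
have r0 : 0 < r by move: r1; rewrite lee_fin; apply: lt_le_trans.
have series_ge0 h : (0 <= \sum_(k <oo) (`|h k| `^ r)%:E)%E.
  by apply: nneseries_ge0 => k _ _; rewrite lee_fin powR_ge0.
rewrite !lpnorm_EFin //; apply: gt0_ler_poweR.
- by rewrite invr_ge0 ltW.
- by rewrite in_itv /= leey andbT.
- by rewrite in_itv /= leey andbT.
apply: lee_nneseries => [k _ _|k _]; rewrite lee_fin ?powR_ge0 //.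
by apply: (ge0_ler_powR (ltW r0)); rewrite ?nnegrE.
Qed.

Definition unit_seq (i : nat) : nat -> R := fun k => (k == i)%:R.

Lemma lpnorm_unit_seq i : N (unit_seq i) = 1%E.
Proof.
case: p p1 => [r r1|_|//]; last first.
  apply/eqP; rewrite eq_le; apply/andP; split.
    apply/lpnormy_leP => k; rewrite /unit_seq lee_fin.
    by case: eqP; rewrite ?normr1 ?normr0.
  have /lpnormy_leP/(_ i) := lexx (lpnorm +oo (unit_seq i)).
  by rewrite /unit_seq eqxx normr1.
have r0 : 0 < r by move: r1; rewrite lee_fin; apply: lt_le_trans.
have off_i k : k != i -> (`|unit_seq i k| `^ r)%:E = 0%E.
  by rewrite /unit_seq => /negbTE ->; rewrite normr0 powR0 ?gt_eqF.
rewrite lpnorm_EFin // (nneseries_split 0 i.+1); last first.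
  by move=> k _; rewrite lee_fin powR_ge0.
rewrite add0n eseries0 => [|k ik _]; last by rewrite off_i // gtn_eqF.
rewrite adde0 big_nat_recr //= big1_seq => [|k]; last first.
  by rewrite mem_iota add0n subn0 => /andP[_ /andP[_ /ltn_eqF/negbT/off_i]].
by rewrite add0e /unit_seq eqxx normr1 powR1 poweR_EFin powR1.
Qed.

Lemma normr_le_lpnorm f i : (`|f i|%:E <= N f)%E.
Proof.
have := @le_lpnorm (fun k => f i * unit_seq i k) f.
rewrite lpnormZ lpnorm_unit_seq mule1; apply => k.
by rewrite /unit_seq; case: eqP => [->|_]; rewrite ?mulr1 // mulr0 normr0.
Qed.

Lemma lpnorm_le_sum_supp (K : nat) f : (forall k, (K <= k)%N -> f k = 0) ->
  (N f <= (\sum_(k < K) `|f k|)%:E)%E.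
Proof.
elim: K f => [|K IH] f fK.
  by rewrite big_ord0 (@eq_lpnorm _ (fun=> 0)) ?lpnorm0 // => k; apply: fK.
pose g k := if k == K then 0 else f k.
rewrite (@eq_lpnorm _ (fun k => g k + f K * unit_seq K k)); last first.
  move=> k; rewrite /g /unit_seq.
  by case: eqP => [->|_]; rewrite ?mulr0 ?addr0 // add0r mulr1.
apply: le_trans (lpnormD _ _) _.
rewrite lpnormZ lpnorm_unit_seq mule1 big_ord_recr /= EFinD leeD2r //.
have -> : \sum_(i < K) `|f i| = \sum_(i < K) `|g i|.
  by apply: eq_bigr => i _; rewrite /g ltn_eqF.
apply: IH => k Kk; rewrite /g; case: eqP => // /eqP kK.
by rewrite fK // ltn_neqAle eq_sym kK.
Qed.

Definition trunc_seq (K : nat) f : nat -> R :=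
  fun k => if (k < K)%N then f k else 0.

Lemma lpnorm_trunc_seq_EFin (r : R) (K : nat) f : 0 < r ->
  lpnorm r%:E (trunc_seq K f) = ((\sum_(0 <= k < K) (`|f k| `^ r)%:E) `^ r^-1)%E.
Proof.
move=> r0; rewrite lpnorm_EFin // (nneseries_split 0 K); last first.
  by move=> k _; rewrite lee_fin powR_ge0.
rewrite add0n eseries0 => [|k Kk _]; last first.
  by rewrite /trunc_seq ltnNge Kk normr0 powR0 ?gt_eqF.
rewrite adde0 !big_nat; congr (_ `^ _)%E; apply: eq_bigr => k /andP[_ kK].
by rewrite /trunc_seq kK.
Qed.

Lemma lpnorm_le_trunc_seq f (c : R) :
  (forall K, (N (trunc_seq K f) <= c%:E)%E) -> (N f <= c%:E)%E.
Proof.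
move=> fc; have c0 : 0 <= c by rewrite -lee_fin (le_trans _ (fc 0%N)) ?lpnorm_ge0.
case: p p1 fc => [r r1|_|//] fc; last first.
  apply/lpnormy_leP => k; apply: le_trans (fc k.+1).
  have /lpnormy_leP/(_ k) := lexx (lpnorm +oo (trunc_seq k.+1 f)).
  by rewrite /trunc_seq ltnSn.
have r0 : 0 < r by move: r1; rewrite lee_fin; apply: lt_le_trans.
have r_itv (x : \bar R) : (0 <= x)%E -> x \in (`[0%E, +oo%E])%R.
  by move=> x0; rewrite in_itv /= leey andbT.
have partial_le K : (\sum_(0 <= k < K) (`|f k| `^ r)%:E <= c%:E `^ r)%E.
  have := fc K; rewrite lpnorm_trunc_seq_EFin //.
  set s := (\sum_(0 <= k < K) _)%E => sc.
  have s0 : (0 <= s)%E by apply: sume_ge0 => k _; rewrite lee_fin powR_ge0.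
  rewrite -[s]poweRe1 // -(mulVf (lt0r_neq0 r0)) poweRrM.
  by apply: gt0_ler_poweR; rewrite ?(ltW r0) ?r_itv ?poweR_ge0 ?lee_fin.
have series_le : (\sum_(k <oo) (`|f k| `^ r)%:E <= c%:E `^ r)%E.
  apply: lime_le; last exact: nearW.
  by apply: is_cvg_nneseries => k _ _; rewrite lee_fin powR_ge0.
rewrite lpnorm_EFin // -[leRHS](@poweRe1 _ c%:E) ?lee_fin //.
rewrite -(mulfV (lt0r_neq0 r0)) poweRrM; apply: gt0_ler_poweR => //.
- by rewrite invr_ge0 ltW.
- by rewrite r_itv // nneseries_ge0 // => k _ _; rewrite lee_fin powR_ge0.
- by rewrite r_itv // poweR_ge0.
Qed.

Lemma lpnorm_fatou (fs : nat -> nat -> R) f (c : R) :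
  (forall k, fs n k @[n --> \oo] --> f k) ->
  (forall n, (N (fs n) <= c%:E)%E) -> (N f <= c%:E)%E.
Proof.
move=> fs_f fs_c; apply: lpnorm_le_trunc_seq => K.
have trunc_fin : N (trunc_seq K f) \is a fin_num.
  rewrite ge0_fin_numE ?lpnorm_ge0 //; apply: le_lt_trans (ltry _).
  by apply: (@lpnorm_le_sum_supp K) => k Kk; rewrite /trunc_seq ltnNge Kk.
have err_cvg0 : \sum_(k < K) `|f k - fs n k| @[n --> \oo] --> 0.
  rewrite -[X in _ --> X](big1_eq (op := +%R) (index_enum 'I_K) xpredT).
  apply: (@cvg_big _ _ +%R 0 xpredT add_continuous) => // k _.
  have : f k - fs n k @[n --> \oo] --> f k - f k.
    by apply: cvgB => //; apply: cvg_cst.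
  by rewrite subrr => /cvg_norm; rewrite normr0.
rewrite -(fineK trunc_fin) lee_fin.
apply: (@cvgr_to_ge _ \oo _ _ (fun n => c + \sum_(k < K) `|f k - fs n k|)).
  by rewrite -[c in X in _ --> X]addr0; apply: cvgD => //; apply: cvg_cst.
apply: nearW => n; rewrite -lee_fin (fineK trunc_fin) EFinD.
set tf := trunc_seq K f; set tfs := trunc_seq K (fs n).
rewrite (eq_lpnorm (g := fun k => tfs k + (tf k - tfs k))); last first.
  by move=> k; rewrite addrC subrK.
apply: le_trans (lpnormD _ _) _; apply: leeD.
  apply: le_trans (fs_c n); apply: le_lpnorm => k.
  by rewrite /tfs /trunc_seq; case: ifP; rewrite ?normr0.
apply: le_trans (@lpnorm_le_sum_supp K _ _) _.
  by move=> k Kk; rewrite /tf /tfs /trunc_seq ltnNge Kk subrr.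
by rewrite lee_fin ler_sum // => k _; rewrite /tf /tfs /trunc_seq ltn_ord.
Qed.

Section lpnorm_increments.
Variables (w : nat -> nat -> R) (r : R ^nat).
Hypothesis w_incr :
  forall j, (N (fun k => (w j k - w j.+1 k)%R) <= (r j)%:E)%E.

Lemma lpnorm_telescope n m : (n <= m)%N ->
  (N (fun k => (w n k - w m k)%R) <= (series r m - series r n)%:E)%E.
Proof.
move=> /subnK <-; elim: (m - n)%N => [|i IH].
  rewrite add0n subrr (eq_lpnorm (g := fun=> 0)) ?lpnorm0 // => k.
  by rewrite subrr.
rewrite (eq_lpnorm
  (g := fun k => (w n k - w (i + n)%N k) + (w (i + n)%N k - w (i + n).+1 k))).
  by rewrite addSn seriesSr addrAC EFinD (le_trans (lpnormD _ _)) ?leeD.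
by move=> k; rewrite addSn addrA subrK.
Qed.

Hypothesis r_cvg : cvgn (series r).

Lemma lpnorm_summable_increments :
  exists L : nat -> R, (forall k, w n k @[n --> \oo] --> L k) /\
    forall n, (N (fun k => (w n k - L k)%R)
                 <= (limn (series r) - series r n)%:E)%E.
Proof.
have r0 j : 0 <= r j by rewrite -lee_fin (le_trans (lpnorm_ge0 _) (w_incr j)).
have w_cvg k : cvgn (w ^~ k).
  apply: (cvgn_summable_increments _ r_cvg) => j.
  by rewrite -lee_fin (le_trans (normr_le_lpnorm _ k) (w_incr j)).
exists (fun k => limn (w ^~ k)); split => [k|n]; first exact: w_cvg.
apply: (@lpnorm_fatou (fun m k => w n k - w (m + n)%N k)) => [k|m].
  apply: cvgB; first exact: cvg_cst.
  by rewrite (cvg_shiftn n (w ^~ k)); apply: w_cvg.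
apply: le_trans (lpnorm_telescope (leq_addl _ _)) _.
by rewrite lee_fin lerD2r series_le_limn.
Qed.

End lpnorm_increments.

End lpnorm_properties.

Section Iinf.
Variable R : realType.

Lemma IinfD m (x y : 'cV[R]_m) k : Iinf (x + y) k = Iinf x k + Iinf y k.
Proof. by rewrite /Iinf; case: insubP => [i _ _|_]; rewrite ?mxE ?addr0. Qed.

Lemma IinfZ m (a : R) (x : 'cV[R]_m) k : Iinf (a *: x) k = a * Iinf x k.
Proof. by rewrite /Iinf; case: insubP => [i _ _|_]; rewrite ?mxE ?mulr0. Qed.

Lemma Iinf0 m k : Iinf (0 : 'cV[R]_m) k = 0.
Proof. by rewrite /Iinf; case: insubP => [i _ _|_]; rewrite ?mxE. Qed.

Lemma Iinf_ord m (x : 'cV[R]_m) (i : 'I_m) : Iinf x i = x i ord0.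
Proof. by rewrite /Iinf insubT //= => Hi; congr (x _ _); apply: val_inj. Qed.

Lemma Iinf_out m (x : 'cV[R]_m) k : (m <= k)%N -> Iinf x k = 0.
Proof. by move=> mk; rewrite /Iinf insubF // ltnNge mk. Qed.

Lemma Iinf_Imx m' m (y : 'cV[R]_m) k :
  Iinf (Imx R m' m *m y) k = if (k < m')%N then Iinf y k else 0.
Proof.
case: ltnP => km; last exact: Iinf_out.
rewrite -[k]/(nat_of_ord (Ordinal km)) Iinf_ord mxE /Iinf.
case: insubP => [j _ jk|]; last first.
  rewrite -leqNgt => mk; apply: big1 => j _.
  by rewrite mxE (gtn_eqF (leq_trans (ltn_ord j) mk)) mul0r.
rewrite (bigD1 j) //= mxE jk eqxx mul1r big1 ?addr0 // => i ij.
by rewrite mxE -jk (inj_eq val_inj) eq_sym (negbTE ij) mul0r.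
Qed.

Lemma Iinf_Imx_le m' m (y : 'cV[R]_m) k :
  `|Iinf (Imx R m' m *m y) k| <= `|Iinf y k|.
Proof. by rewrite Iinf_Imx; case: ifP; rewrite ?normr0. Qed.

Lemma Iinf_Imx_id m' m (y : 'cV[R]_m) : (m <= m')%N ->
  Iinf (Imx R m' m *m y) =1 Iinf y.
Proof.
move=> mm' k; rewrite Iinf_Imx; case: ltnP => // m'k.
by rewrite Iinf_out // (leq_trans mm' m'k).
Qed.

End Iinf.

Section Iinf_lpnorm.
Variables (R : realType) (p : \bar R).
Hypothesis p1 : (1 <= p)%E.
Local Notation N := (lpnorm p).

Lemma lpnorm_Iinf_fin_num m (x : 'cV[R]_m) : N (Iinf x) \is a fin_num.
Proof.
rewrite ge0_fin_numE ?lpnorm_ge0 //; apply: le_lt_trans (ltry _).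
by apply: (@lpnorm_le_sum_supp _ _ p1 m) => k; apply: Iinf_out.
Qed.

Lemma lpnorm_Iinf_eq0 m (x : 'cV[R]_m) : N (Iinf x) = 0%E -> x = 0.
Proof.
move=> x0; apply/matrixP => i j; rewrite (ord1 j) mxE.
have := normr_le_lpnorm p1 (Iinf x) i; rewrite x0 Iinf_ord lee_fin.
by rewrite normr_le0 => /eqP.
Qed.

Lemma lpnorm_Iinf0 m : N (Iinf (0 : 'cV[R]_m)) = 0%E.
Proof.
by rewrite (eq_lpnorm p (g := fun=> 0)) ?lpnorm0 // => k; rewrite Iinf0.
Qed.

Lemma opnorm_ge0 m (S : 'cV[R]_m -> nat -> R) : (0 <= opnorm p S)%E.
Proof.
apply: le_trans (_ : N (S 0%R) <= _)%E; first exact: lpnorm_ge0.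
by apply: ereal_sup_ubound; exists 0 => //=; rewrite lpnorm_Iinf0.
Qed.

Lemma lpnorm_mulmx_le m' m (A : 'M[R]_(m', m)) (y : 'cV[R]_m) :
  (N (Iinf (A *m y)) <= mxnorm p A * N (Iinf y))%E.
Proof.
have [->|y0] := eqVneq y 0; first by rewrite mulmx0 !lpnorm_Iinf0 mule0.
set t := fine (N (Iinf y)).
have yE : N (Iinf y) = t%:E by rewrite fineK ?lpnorm_Iinf_fin_num.
have t0 : 0 < t.
  rewrite lt_neqAle fine_ge0 ?lpnorm_ge0 // andbT eq_sym.
  by apply: contra_neq y0 => t0; apply: lpnorm_Iinf_eq0; rewrite yE t0.
have unit_le : (N (Iinf (A *m (t^-1 *: y))) <= mxnorm p A)%E.
  apply: ereal_sup_ubound; exists (t^-1 *: y) => //=.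
  rewrite (eq_lpnorm p (IinfZ _ _)) (lpnormZ p1) yE -EFinM.
  by rewrite ger0_norm ?invr_ge0 ?(ltW t0) // mulVf ?gt_eqF.
rewrite -scalemxAr (eq_lpnorm p (IinfZ _ _)) (lpnormZ p1) in unit_le.
rewrite ger0_norm ?invr_ge0 ?(ltW t0) // in unit_le.
have t0E : (0 <= t%:E)%E by rewrite lee_fin ltW.
have := lee_wpmul2r t0E unit_le.
by rewrite muleAC -EFinM mulVf ?gt_eqF // mul1e yE.
Qed.

End Iinf_lpnorm.

Section prodW_limit.
Variables (R : realType) (p : \bar R) (d : nat) (ms : nat -> nat).
Variables W P : forall k, 'M[R]_(dimseq d ms k.+1, dimseq d ms k).
Hypotheses (p1 : (1 <= p)%E) (ms_mono : forall k, (ms k <= ms k.+1)%N).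
Hypothesis W_def : forall k, W k = Imx R _ _ + P k.
Hypothesis normP_fin : forall k, mxnorm p (P k) \is a fin_num.
Local Notation N := (lpnorm p).
Let q k := fine (mxnorm p (P k)).
Hypothesis q_cvg : cvgn (series q).

Lemma lpnorm_prodW_le n x :
  (N (Iinf (prodW W n *m x)) <= (expR (series q n))%:E * N (Iinf x))%E.
Proof.
elim: n => [|n IH]; first by rewrite /= mul1mx /series /= big_geq // expR0 mul1e.
set y := prodW W n *m x.
have Iy : (N (Iinf (Imx R (dimseq d ms n.+1) _ *m y)) <= N (Iinf y))%E.
  by apply: (le_lpnorm p1) => k; apply: Iinf_Imx_le.
have Py : (N (Iinf (P n *m y)) <= (q n)%:E * N (Iinf y))%E.
  by rewrite /q fineK ?lpnorm_mulmx_le.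
rewrite /= -mulmxA W_def mulmxDl -/y (eq_lpnorm _ (IinfD _ _)).
apply: le_trans (lpnormD p1 _ _) _; apply: le_trans (leeD Iy Py) _.
rewrite -[X in (X + _)%E]mul1e -ge0_muleDl ?lee_fin ?fine_ge0 ?opnorm_ge0 //.
rewrite seriesSr (addrC (series q n)) expRD EFinM -muleA.
apply: lee_pmul; rewrite ?lpnorm_ge0 ?lee_fin ?addr_ge0 ?fine_ge0 ?opnorm_ge0 //.
by rewrite expR_ge1Dx.
Qed.

Lemma lpnorm_prodW_increment n x :
  (N (fun k => (Iinf (prodW W n.+1 *m x) k - Iinf (prodW W n.+2 *m x) k)%R)
    <= (q n.+1)%:E * ((expR (series q n.+1))%:E * N (Iinf x)))%E.
Proof.
set y := prodW W n.+1 *m x.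
rewrite (eq_lpnorm p (g := fun k => - Iinf (P n.+1 *m y) k)); last first.
  move=> k; rewrite [prodW W n.+2]/= -mulmxA W_def mulmxDl IinfD -/y.
  by rewrite Iinf_Imx_id ?opprD ?addrA ?subrr ?add0r //; apply: ms_mono.
rewrite (lpnormN p1); apply: le_trans (lpnorm_mulmx_le p1 _ _) _.
by rewrite /q fineK // lee_wpmul2l ?opnorm_ge0 ?lpnorm_prodW_le.
Qed.

(* Iterates are compared from n = 1 on: m_0 = d need not be <= m_1, so the
   first step is not an increment of the form I_(oo,m_1) P_1 x. *)
Definition prodW_lim (x : 'cV[R]_d) (k : nat) : R :=
  limn (fun n => Iinf (prodW W n.+1 *m x) k).

Let q' j := q j.+1.
Let M := expR (limn (series q)).

Let q_ge0 j : 0 <= q j.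
Proof. by rewrite fine_ge0 ?opnorm_ge0. Qed.

Let q'_cvg : cvgn (series q').
Proof. exact: is_cvg_series_shiftS. Qed.

Lemma prodW_lim_spec x :
  (forall k, Iinf (prodW W n.+1 *m x) k @[n --> \oo] --> prodW_lim x k) /\
  forall n, (N (fun k => (Iinf (prodW W n.+1 *m x) k - prodW_lim x k)%R)
    <= (M * fine (N (Iinf x)) * (limn (series q') - series q' n))%:E)%E.
Proof.
set c := M * fine (N (Iinf x)).
have incr j :
  (N (fun k => (Iinf (prodW W j.+1 *m x) k - Iinf (prodW W j.+2 *m x) k)%R)
    <= ((c *: q') j)%:E)%E.
  apply: le_trans (lpnorm_prodW_increment _ _) _.
  rewrite -(fineK (lpnorm_Iinf_fin_num p1 x)) -!EFinM lee_fin /= mulrC /c.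
  rewrite ler_wpM2r ?q_ge0 // ler_wpM2r ?fine_ge0 ?lpnorm_ge0 // ler_expR.
  by apply: series_le_limn.
have cq'_cvg := @is_cvg_seriesZ _ q' c q'_cvg.
have [L [w_L tail]] := lpnorm_summable_increments p1 incr cq'_cvg.
have LE : prodW_lim x = L.
  by apply/funext => k; apply: cvg_lim; [exact: Rhausdorff | exact: w_L].
rewrite LE; split => // n.
by move: (tail n); rewrite lim_seriesZ // seriesZ /= -mulrBr.
Qed.

Lemma prodW_limD (a : R) x y k :
  prodW_lim (a *: x + y) k = a * prodW_lim x k + prodW_lim y k.
Proof.
apply: cvg_lim; first exact: Rhausdorff.
under eq_fun do rewrite mulmxDr -scalemxAr IinfD IinfZ.
by apply: cvgD; [apply: cvgMr | ]; apply: (prodW_lim_spec _).1.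
Qed.

Lemma lpnorm_prodW_lim_lty x : (N (prodW_lim x) < +oo)%E.
Proof.
set w := Iinf (prodW W 1 *m x).
rewrite (eq_lpnorm p (g := fun k => w k + - (w k - prodW_lim x k))); last first.
  by move=> k; rewrite opprB addrC subrK.
apply: le_lt_trans (lpnormD p1 _ _) _; rewrite (lpnormN p1).
apply: lte_add_pinfty.
  by rewrite -ge0_fin_numE ?lpnorm_Iinf_fin_num ?lpnorm_ge0.
by apply: le_lt_trans ((prodW_lim_spec x).2 0%N) _; rewrite ltry.
Qed.

Lemma opnorm_prodW_sub_lim_le n :
  (opnorm p (fun x k => (Iinf (prodW W n.+1 *m x) k - prodW_lim x k)%R)
    <= (M * (limn (series q') - series q' n))%:E)%E.
Proof.
apply: ge_ereal_sup => _ [x /= x1 <-].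
apply: le_trans ((prodW_lim_spec x).2 n) _.
have x_le1 : fine (N (Iinf x)) <= 1.
  by rewrite -lee_fin fineK ?lpnorm_Iinf_fin_num.
have tail_ge0 : 0 <= limn (series q') - series q' n.
  by rewrite subr_ge0 series_le_limn // => j; apply: q_ge0.
rewrite lee_fin -mulrA ler_wpM2l ?expR_ge0 //.
by rewrite ler_piMl ?fine_ge0 ?lpnorm_ge0.
Qed.

Lemma opnorm_prodW_sub_lim_cvg0 :
  (fun n => opnorm p (fun x k => Iinf (prodW W n *m x) k - prodW_lim x k))
    @ \oo --> 0%E.
Proof.
rewrite -(@cvg_shiftS _ _ (nbhs (0 : \bar R))).
pose tail n := (M * (limn (series q') - series q' n))%:E.
apply: (@squeeze_cvge _ _ _ _ (fun=> 0%E) _ tail).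
- apply: nearW => n; apply/andP; split; first exact: opnorm_ge0.
  exact: opnorm_prodW_sub_lim_le.
- exact: cvg_cst.
apply: cvg_EFin; first exact: nearW.
rewrite -(mulr0 M) -(subrr (limn (series q'))); apply: cvgMr; apply: cvgB.
  exact: cvg_cst.
exact: q'_cvg.
Qed.

End prodW_limit.

Theorem corollary4p4 (R : realType) (p : \bar R) (d : nat) (ms : nat -> nat)
  (W P : forall k, 'M[R]_(dimseq d ms k.+1, dimseq d ms k)) :
  (1 <= p)%E ->
  (forall k, (0 < ms k)%N) ->
  (forall k, (ms k <= ms k.+1)%N) ->
  (forall k, W k = Imx R _ _ + P k) ->
  (\sum_(0 <= k <oo) mxnorm p (P k) < +oo)%E ->
  exists T : 'cV[R]_d -> nat -> R,
    [/\ (forall (a : R) x y k, T (a *: x + y) k = a * T x k + T y k),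
        (forall x, lpnorm p (T x) < +oo)%E &
        (fun n => opnorm p (fun x k => Iinf (prodW W n *m x) k - T x k))
          @ \oo --> 0%E].
Proof.
move=> p1 _ ms_mono W_def normP_lty.
have normP_ge0 k : (0 <= mxnorm p (P k))%E by apply: opnorm_ge0.
have normP_fin := nneseries_lty_fin_num normP_ge0 normP_lty.
have q_cvg := is_cvg_series_fine normP_ge0 normP_lty.
exists (prodW_lim W); split.
- exact: (prodW_limD p1 ms_mono W_def normP_fin q_cvg).
- exact: (lpnorm_prodW_lim_lty p1 ms_mono W_def normP_fin q_cvg).
- exact: (opnorm_prodW_sub_lim_cvg0 p1 ms_mono W_def normP_fin q_cvg).
Qed.
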